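(* Let $a,b,d\in\mathbb{C}$ with $a\neq b$. For every integer $n\ge 1$, $$\int_a^b S_n(u;a,b,d)\,du=2^n(b-a)^{n+1}B_n\!\left(\frac12+\frac{d}{b-a}\right),$$ where the integral is along any piecewise smooth path from $a$ to $b$ (the integrand being a polynomial) and $$S_n(u;a,b,d)=\sum_{k=0}^{n}\binom{n}{k}(2d)^k\,Q_{n-k}(u;a,b).$$ In particular (case $d=0$), $\int_a^b Q_n(u;a,b)\,du=2^nB_n(\tfrac12)(b-a)^{n+1}$.
   Context: The MacMahon numbers $M_{n,k}$ ($n\ge1$, $1\le k\le n$) are defined by $M_{n,1}=1$ for all $n\ge1$ and, for $n\ge 2$, $2\le k\le n$, $M_{n,k}=(2k-1)M_{n-1,k}+(2n-2k+1)M_{n-1,k-1}$, with the convention $M_{n-1,n}=0$. For $a,b\in\mathbb{C}$ the derivative polynomial is $Q_n(u;a,b)=\sum_{k=1}^{n+1}M_{n+1,k}(u-a)^{n+1-k}(u-b)^{k-1}$ ($n\ge 0$). The Bernoulli polynomials $B_n(w)$ are defined by $\sum_{n\ge0}B_n(w)\frac{t^n}{n!}=\frac{t e^{wt}}{e^t-1}$. *)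

From HB Require Import structures.
From mathcomp Require Import all_boot all_order all_algebra.
Set Implicit Arguments. Unset Strict Implicit. Unset Printing Implicit Defensive.
Import Order.TTheory GRing.Theory Num.Theory.
Local Open Scope ring_scope.

Fixpoint macmahon (n k : nat) {struct n} : nat :=
  match n with
  | 0 => 0
  | 1 => if k == 1 then 1 else 0
  | n'.+1 =>
      match k with
      | 0 => 0
      | 1 => 1
      | k'.+1 =>
          if (k <= n)%N then
            ((2 * k - 1) * macmahon n' k + (2 * n - 2 * k + 1) * macmahon n' k')%N
          else 0
      end
  end.

Definition Qpoly (R : nzRingType) (a b : R) (n : nat) : {poly R} :=
  \sum_(1 <= k < n.+2)
     (macmahon n.+1 k)%:R *: (('X - a%:P) ^+ (n.+1 - k) * ('X - b%:P) ^+ (k - 1)).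

Definition Spoly (R : nzRingType) (a b d : R) (n : nat) : {poly R} :=
  \sum_(k < n.+1) ('C(n, k)%:R * (2 * d) ^+ k) *: Qpoly a b (n - k).

Definition prim (R : fieldType) (p : {poly R}) : {poly R} :=
  \poly_(i < (size p).+1) (if i is j.+1 then p`_j / (j.+1)%:R else 0).

(* Path integral from a to b of a polynomial (independent of the path):
   the difference of the antiderivative at the endpoints. *)
Definition poly_integral (R : fieldType) (p : {poly R}) (a b : R) : R :=
  (prim p).[b] - (prim p).[a].

(* Bernoulli polynomials B_n(w), defined by the coefficient identities of
   (e^t - 1) * sum_n B_n(w) t^n/n! = t e^{wt}, i.e. for all n,
   sum_{k<=n} C(n+1,k) B_k(w) = (n+1) w^n, solved for B_n(w). *)
Fixpoint bern_seq (R : fieldType) (w : R) (n : nat) : seq R :=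
  match n with
  | 0 => [:: 1]
  | n'.+1 =>
      let s := bern_seq w n' in
      rcons s (w ^+ n - \sum_(k < n) ('C(n.+1, k)%:R / (n.+1)%:R) * s`_k)
  end.

Definition bernoulli_poly (R : fieldType) (n : nat) (w : R) : R :=
  (bern_seq w n)`_n.

From HB Require Import structures.
From mathcomp Require Import all_boot all_order all_algebra.
From mathcomp Require Import zify ring.
Set Implicit Arguments. Unset Strict Implicit. Unset Printing Implicit Defensive.
Import Order.TTheory GRing.Theory Num.Theory.
Local Open Scope ring_scope.

(* Put c = b - a and let I_n be the integral of Q_n from a to b. The Q_n satisfy
   Q_(n+1) = 2 (u - a)(u - b) Q_n' + (2u - a - b) Q_n, with Q_n(b) = c^n and
   Q_n(a) = (-c)^n. The same recurrence with the sign of its last term flipped,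
   started at c, produces linear polynomials E_j with E_j' = (-c)^j - c^j, and the
   binomial convolution of (Q_n) with (E_j) has zero derivative. Consequently
   sum_k C(m,k) Q_k E'_(m-k) is an exact derivative, and evaluating at the endpoints
   gives sum_k C(m,k) I_k ((-c)^(m-k) - c^(m-k)) = -2c^2 [m = 1]. In exponential
   generating functions this says I(t) (e^(ct) - e^(-ct)) = 2c^2 t, hence the
   generating function of the integrals of S_n is
   e^(2dt) I(t) = c (2ct) e^((c+2d)t) / (e^(2ct) - 1), that of c (2c)^n B_n((c+2d)/(2c)). *)

Lemma macmahon0 n : macmahon n 0 = 0%N.
Proof. by case: n => [|[|n]]. Qed.

Lemma macmahon1 n : macmahon n.+1 1 = 1%N.
Proof. by case: n. Qed.

Lemma macmahon_eq0 n k : (n < k)%N -> macmahon n k = 0%N.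
Proof.
case: n => [//|[|n]]; first by case: k => [|[|]].
by case: k => [|[|k]] //= lt_nk; rewrite leqNgt lt_nk.
Qed.

Lemma macmahonS n j : (j <= n.+1)%N ->
  macmahon n.+2 j.+1
  = ((2 * j + 1) * macmahon n.+1 j.+1 + (2 * n + 3 - 2 * j) * macmahon n.+1 j)%N.
Proof.
case: j => [|j] le_jn; first by rewrite macmahon0 !macmahon1; lia.
rewrite [LHS]/= ifT; last by lia.
by congr (_ * _ + _ * _)%N; lia.
Qed.

Lemma macmahon_diag n : macmahon n.+1 n.+1 = 1%N.
Proof. by elim: n => [//|n IHn]; rewrite macmahonS // macmahon_eq0 // IHn; lia. Qed.

Arguments macmahon : simpl never.

(* n! times the n-th coefficient of the product of the exponential generating
   functions of f and g. *)
Definition binconv (R : comNzRingType) (f g : nat -> R) n :=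
  \sum_(k < n.+1) 'C(n, k)%:R * (f k * g (n - k)%N).
Arguments binconv {R}.

Section BinomialConvolution.
Variable R : comNzRingType.
Implicit Types (f g h : nat -> R) (x y : R).

Lemma eq_binconv f f' g g' : f =1 f' -> g =1 g' -> binconv f g =1 binconv f' g'.
Proof. by move=> eq_f eq_g n; apply: eq_bigr => k _; rewrite eq_f eq_g. Qed.

Lemma binconvC f g n : binconv f g n = binconv g f n.
Proof.
rewrite /binconv (reindex_inj rev_ord_inj); apply: eq_bigr => k _ /=.
have le_kn : (k <= n)%N by rewrite -ltnS.
by rewrite subKn // bin_sub // [f _ * _]mulrC.
Qed.

Lemma binconvS f g n :
  binconv f g n.+1 = binconv (fun k => f k.+1) g n + binconv f (fun k => g k.+1) n.
Proof.
rewrite /binconv big_ord_recl /=.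
under eq_bigr => i _ do rewrite /bump /= add1n binS natrD mulrDl subSS.
rewrite big_split /= addrA [RHS]addrC; congr (_ + _).
rewrite [RHS]big_ord_recl /= !bin0 subn0 big_ord_recr /= bin_small // mul0r addr0.
congr (_ + _); first by rewrite subn0.
by apply: eq_bigr => i _; rewrite /bump /= add1n subnSK.
Qed.

Lemma binconvBl f g h n :
  binconv (fun k => f k - g k) h n = binconv f h n - binconv g h n.
Proof. by rewrite /binconv -sumrB; apply: eq_bigr => i _; ring. Qed.

Lemma binconvMr x f g n : binconv f (fun k => x * g k) n = x * binconv f g n.
Proof. by rewrite /binconv mulr_sumr; apply: eq_bigr => i _; ring. Qed.

Lemma binconv_exp x y n :
  binconv (fun k => x ^+ k) (fun k => y ^+ k) n = (x + y) ^+ n.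
Proof.
rewrite binconvC exprDn; apply: eq_bigr => i _.
by rewrite mulr_natl mulrC.
Qed.

Lemma binconv_delta1 f n :
  binconv f (fun k => (k == 1)%:R) n.+1 = n.+1%:R * f n.
Proof.
rewrite binconvC /binconv 2!big_ord_recl big1 /= => [|i _]; last by rewrite !mul0r mulr0.
by rewrite bin1 subSS !subn0 !mul0r !mulr0 mul1r add0r addr0.
Qed.

End BinomialConvolution.

Lemma horner_binconv (R : comNzRingType) (f g : nat -> {poly R}) n x :
  (binconv f g n).[x] = binconv (fun k => (f k).[x]) (fun k => (g k).[x]) n.
Proof.
rewrite /binconv horner_sum; apply: eq_bigr => i _.
by rewrite hornerM -polyC_natr hornerC hornerM.
Qed.

Lemma deriv_binconv (R : comNzRingType) (f g : nat -> {poly R}) n :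
  (binconv f g n)^`()
  = binconv (fun k => (f k)^`()) g n + binconv f (fun k => (g k)^`()) n.
Proof.
rewrite /binconv linear_sum -big_split; apply: eq_bigr => i _ /=.
by rewrite !mulr_natl derivMn derivM -mulrnDl.
Qed.

Section BinconvAssoc.
Variable R : numFieldType.
Implicit Types f g h : nat -> R.

(* Truncated exponential generating functions turn [binconv] into the product of
   polynomials, which makes associativity a consequence of [mulrA]. *)
Let egf f N : {poly R} := \poly_(i < N) (f i / (i`!)%:R).

Let binconv_egf f g n N : (n < N)%N ->
  binconv f g n = (n`!)%:R * (egf f N * egf g N)`_n.
Proof.
move=> lt_nN; rewrite coefM mulr_sumr; apply: eq_bigr => j _.
have le_jn : (j <= n)%N by rewrite -ltnS.
rewrite !coef_poly (leq_ltn_trans le_jn lt_nN) (leq_ltn_trans (leq_subr j n) lt_nN).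
have fact_neq0 m : (m`!)%:R != 0 :> R by rewrite pnatr_eq0 -lt0n fact_gt0.
rewrite -(bin_fact le_jn) !natrM; field.
by rewrite !fact_neq0.
Qed.

Let coefM_eq (p p' q : {poly R}) n :
  (forall j, (j <= n)%N -> p`_j = p'`_j) -> (p * q)`_n = (p' * q)`_n.
Proof. by move=> eq_p; rewrite !coefM; apply: eq_bigr => j _; rewrite eq_p // -ltnS. Qed.

Lemma binconvA f g h n : binconv (binconv f g) h n = binconv f (binconv g h) n.
Proof.
rewrite !(@binconv_egf _ _ n n.+1) //; congr (_ * _).
have egf_binconv u v j : (j <= n)%N ->
    (egf (binconv u v) n.+1)`_j = (egf u n.+1 * egf v n.+1)`_j.
  move=> le_jn; rewrite coef_poly ltnS le_jn (@binconv_egf _ _ j n.+1) //.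
  by rewrite mulrAC mulfV ?mul1r // pnatr_eq0 -lt0n fact_gt0.
rewrite (coefM_eq _ (egf_binconv f g)) [egf f _ * egf (binconv _ _) _]mulrC.
rewrite (coefM_eq _ (egf_binconv g h)).
by rewrite [_ * egf h _ * _]mulrC mulrA.
Qed.

End BinconvAssoc.

Lemma XsubC_mul_deriv_exp (R : comNzRingType) (c : R) p :
  ('X - c%:P) * (('X - c%:P) ^+ p)^`() = ('X - c%:P) ^+ p *+ p.
Proof.
rewrite deriv_exp derivXsubC mul1r; case: p => [|p]; first by rewrite mulr0.
by rewrite mulrnAr -exprS.
Qed.

Section DerivativePolynomials.
Variables (R : comNzRingType) (a b : R).
Local Notation A := ('X - a%:P).
Local Notation B := ('X - b%:P).

Lemma QpolyE n : Qpoly a b n =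
  \sum_(j < n.+1) (macmahon n.+1 j.+1)%:R *: (A ^+ (n - j) * B ^+ j).
Proof.
rewrite /Qpoly big_add1 big_mkord; apply: eq_bigr => j _.
by rewrite subSS subn1.
Qed.

Lemma Qpoly0 : Qpoly a b 0 = 1.
Proof. by rewrite QpolyE big_ord1 macmahon1 scale1r !expr0 mulr1. Qed.

Lemma Qrec_monomial p q :
  2 * (A * B) * (A ^+ p * B ^+ q)^`() + (A + B) * (A ^+ p * B ^+ q)
  = (2 * q + 1)%:R * (A ^+ p.+1 * B ^+ q) + (2 * p + 1)%:R * (A ^+ p * B ^+ q.+1).
Proof.
have dA := XsubC_mul_deriv_exp a p; have dB := XsubC_mul_deriv_exp b q.
rewrite derivM !exprS.
transitivity (2 * B * B ^+ q * (A * (A ^+ p)^`()) + 2 * A * A ^+ p * (B * (B ^+ q)^`())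
              + (A + B) * (A ^+ p * B ^+ q)); first by ring.
by rewrite dA dB; ring.
Qed.

Lemma QpolyS n :
  Qpoly a b n.+1 = 2 * (A * B) * (Qpoly a b n)^`() + (A + B) * Qpoly a b n.
Proof.
rewrite !QpolyE linear_sum /= !mulr_sumr -big_split /=.
have -> : \sum_(j < n.+2) (macmahon n.+2 j.+1)%:R *: (A ^+ (n.+1 - j) * B ^+ j) =
  \sum_(j < n.+2) ((2 * j + 1)%:R * (macmahon n.+1 j.+1)%:R *: (A ^+ (n.+1 - j) * B ^+ j)
     + (2 * n + 3 - 2 * j)%:R * (macmahon n.+1 j)%:R *: (A ^+ (n.+1 - j) * B ^+ j)).
  apply: eq_bigr => j _; rewrite macmahonS; last by rewrite -ltnS.
  by rewrite natrD !natrM scalerDl.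
rewrite big_split /= big_ord_recr /= (@macmahon_eq0 n.+1 n.+2) // mulr0 scale0r addr0.
rewrite [\sum_(i < n.+2) _]big_ord_recl /= macmahon0 mulr0 scale0r add0r -big_split /=.
apply: eq_bigr => j _.
rewrite linearZ /= -!scalerAr -scalerDr Qrec_monomial /bump /= add1n subSS subSn -1?ltnS //.
have -> : (2 * n + 3 - 2 * j.+1 = 2 * (n - j) + 1)%N by have := ltn_ord j; lia.
rewrite scalerDr -!scalerA !scaler_nat !mulr_natl.
by rewrite [in RHS]mulrnAC [X in _ + X = _]mulrnAC.
Qed.

Lemma horner_Qpoly_right n : (Qpoly a b n).[b] = (b - a) ^+ n.
Proof.
rewrite QpolyE horner_sum big_ord_recl big1 => [|j _].
  by rewrite macmahon1 scale1r subn0 expr0 mulr1 !hornerE ?addr0.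
by rewrite hornerZ hornerM !hornerE subrr expr0n /= mulr0.
Qed.

Lemma horner_Qpoly_left n : (Qpoly a b n).[a] = (a - b) ^+ n.
Proof.
rewrite QpolyE horner_sum big_ord_recr big1 /= => [|j _].
  by rewrite macmahon_diag scale1r subnn expr0 mul1r !hornerE ?add0r.
rewrite hornerZ hornerM !hornerE subrr expr0n /=.
by rewrite subn_eq0 leqNgt ltn_ord mulr0 mul0r.
Qed.

End DerivativePolynomials.

(* Closed form of the sequence E_0 = b - a,
   E_(j+1) = 2 (X - a)(X - b) E_j' - (2X - a - b) E_j of [QdualS]. *)
Definition Qdual (R : comNzRingType) (a b : R) j : {poly R} :=
  (- (b - a)) ^+ j *: ('X - a%:P) - (b - a) ^+ j *: ('X - b%:P).
Arguments Qdual {R}.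

Section DualPolynomials.
Variables (R : comNzRingType) (a b : R).
Local Notation A := ('X - a%:P).
Local Notation B := ('X - b%:P).

Lemma Qdual0 : Qdual a b 0 = (b - a)%:P.
Proof. by rewrite /Qdual !expr0 !scale1r polyCB; ring. Qed.

Lemma deriv_Qdual j : (Qdual a b j)^`() = ((- (b - a)) ^+ j - (b - a) ^+ j)%:P.
Proof. by rewrite /Qdual derivB !derivZ !derivXsubC !alg_polyC -polyCB. Qed.

Lemma horner_Qdual_right j : (Qdual a b j).[b] = (- (b - a)) ^+ j * (b - a).
Proof. by rewrite /Qdual !hornerE subrr mulr0 subr0. Qed.

Lemma horner_Qdual_left j : (Qdual a b j).[a] = (b - a) ^+ j * (b - a).
Proof. by rewrite /Qdual !hornerE subrr mulr0 sub0r -mulrN opprB. Qed.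

Lemma QdualS j :
  Qdual a b j.+1 = 2 * (A * B) * (Qdual a b j)^`() - (A + B) * Qdual a b j.
Proof.
by rewrite deriv_Qdual /Qdual !exprS -!mul_polyC !polyCB !polyCM !polyCN !polyCB; ring.
Qed.

Lemma binconv_Qpoly_QdualS n :
  binconv (Qpoly a b) (Qdual a b) n.+1
  = 2 * (A * B) * (binconv (Qpoly a b) (Qdual a b) n)^`().
Proof.
rewrite binconvS deriv_binconv /binconv mulrDr !mulr_sumr -!big_split /=.
by apply: eq_bigr => i _; rewrite QpolyS QdualS; ring.
Qed.

Lemma deriv_binconv_Qpoly_Qdual n : (binconv (Qpoly a b) (Qdual a b) n)^`() = 0.
Proof.
have conv0 : binconv (Qpoly a b) (Qdual a b) 0 = (b - a)%:P.
  by rewrite /binconv big_ord1 Qpoly0 Qdual0 !mul1r.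
case: n => [|n]; first by rewrite conv0 derivC.
suff -> : binconv (Qpoly a b) (Qdual a b) n.+1 = 0 by rewrite deriv0.
elim: n => [|n IHn]; rewrite binconv_Qpoly_QdualS; first by rewrite conv0 derivC mulr0.
by rewrite IHn deriv0 mulr0.
Qed.

(* The recurrences give Q_(k+1) E_j' - Q_k' E_(j+1) = (A + B) (Q_k E_j)'. *)
Lemma binconv_Qpoly_deriv_Qdual n :
  binconv (Qpoly a b) (fun j => (Qdual a b j)^`()) n.+1
  = (binconv (Qpoly a b) (fun j => Qdual a b j.+1) n)^`().
Proof.
rewrite binconvS deriv_binconv; congr (_ + _); apply/eqP; rewrite -subr_eq0; apply/eqP.
transitivity ((A + B) * (binconv (Qpoly a b) (Qdual a b) n)^`());
  last by rewrite deriv_binconv_Qpoly_Qdual mulr0.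
rewrite deriv_binconv /binconv mulrDr !mulr_sumr -sumrB -big_split /=.
by apply: eq_bigr => i _; rewrite QpolyS QdualS; ring.
Qed.

End DualPolynomials.

Section PolyIntegral.
Variable R : fieldType.
Implicit Types (p q : {poly R}) (x : R).

Lemma coef_prim p i : (prim p)`_i = if i is j.+1 then p`_j / j.+1%:R else 0.
Proof.
rewrite /prim coef_poly; case: ltnP => // le_pi.
by case: i le_pi => // j le_pj; rewrite nth_default ?mul0r.
Qed.

Lemma primD p q : prim (p + q) = prim p + prim q.
Proof.
apply/polyP => -[|j]; rewrite coefD !coef_prim ?addr0 //.
by rewrite coefD mulrDl.
Qed.

Lemma primZ x p : prim (x *: p) = x *: prim p.
Proof.
apply/polyP => -[|j]; rewrite coefZ !coef_prim ?mulr0 //.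
by rewrite coefZ mulrA.
Qed.

Lemma prim0 : prim (0 : {poly R}) = 0.
Proof. by apply/polyP => -[|j]; rewrite coef_prim coef0 // coef0 mul0r. Qed.

Lemma poly_integralZ x p a b : poly_integral (x *: p) a b = x * poly_integral p a b.
Proof. by rewrite /poly_integral primZ !hornerZ mulrBr. Qed.

Lemma poly_integral_sum (I : Type) (r : seq I) (F : I -> {poly R}) a b :
  poly_integral (\sum_(i <- r) F i) a b = \sum_(i <- r) poly_integral (F i) a b.
Proof.
apply: (big_morph (fun p => poly_integral p a b)) => [p q|].
  by rewrite /poly_integral primD !hornerD addrACA opprD.
by rewrite /poly_integral prim0 !horner0 subrr.
Qed.

End PolyIntegral.

Lemma poly_integral_deriv (R : numFieldType) (p : {poly R}) a b :
  poly_integral p^`() a b = p.[b] - p.[a].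
Proof.
rewrite /poly_integral; have -> : prim p^`() = p - (p`_0)%:P.
  apply/polyP => -[|j]; rewrite coef_prim coefB coefC ?subrr //.
  by rewrite coef_deriv subr0 -[_ *+ _]mulr_natr mulfK // pnatr_eq0.
by rewrite !hornerE opprD addrACA subrr addr0.
Qed.

Definition Qintegral (R : fieldType) (a b : R) k := poly_integral (Qpoly a b k) a b.
Arguments Qintegral {R}.

Lemma binconv_Qintegral (R : numFieldType) (a b : R) m :
  binconv (Qintegral a b) (fun j => (- (b - a)) ^+ j - (b - a) ^+ j) m
  = - 2 * (b - a) ^+ 2 * (m == 1)%:R.
Proof.
set c := b - a; case: m => [|n]; first by rewrite /binconv big_ord1 !expr0 subrr !mulr0.
have -> : binconv (Qintegral a b) (fun j => (- c) ^+ j - c ^+ j) n.+1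
    = poly_integral (binconv (Qpoly a b) (fun j => (Qdual a b j)^`()) n.+1) a b.
  rewrite poly_integral_sum; apply: eq_bigr => i _.
  rewrite deriv_Qdual [in RHS]mulrCA [in RHS]mulrC -polyC_natr -polyCM mul_polyC.
  by rewrite poly_integralZ /Qintegral; ring.
rewrite binconv_Qpoly_deriv_Qdual poly_integral_deriv !horner_binconv.
have at_b : binconv (fun k => (Qpoly a b k).[b]) (fun k => (Qdual a b k.+1).[b]) n
    = - c ^+ 2 * (c + - c) ^+ n.
  rewrite -(binconv_exp c) -binconvMr; apply: eq_binconv => k.
    by rewrite horner_Qpoly_right.
  by rewrite horner_Qdual_right exprS /c; ring.
have at_a : binconv (fun k => (Qpoly a b k).[a]) (fun k => (Qdual a b k.+1).[a]) n
    = c ^+ 2 * (- c + c) ^+ n.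
  rewrite -(binconv_exp (- c)) -binconvMr; apply: eq_binconv => k.
    by rewrite horner_Qpoly_left -opprB.
  by rewrite horner_Qdual_left exprS /c; ring.
rewrite at_b at_a addrN addNr expr0n eqSS.
by case: n {at_a at_b} => [|n] /=; ring.
Qed.

Lemma poly_integral_Spoly (R : fieldType) (a b d : R) n :
  poly_integral (Spoly a b d n) a b = binconv (fun k => (2 * d) ^+ k) (Qintegral a b) n.
Proof.
by rewrite /Spoly poly_integral_sum; apply: eq_bigr => k _; rewrite poly_integralZ mulrA.
Qed.

Section BernoulliRecurrence.
Variable R : fieldType.

Lemma size_bern_seq (w : R) n : size (bern_seq w n) = n.+1.
Proof. by elim: n => [//|n IHn] /=; rewrite size_rcons IHn. Qed.

Lemma nth_bern_seq (w : R) n k : (k <= n)%N -> (bern_seq w n)`_k = bernoulli_poly k w.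
Proof.
elim: n => [|n IHn]; first by rewrite leqn0 => /eqP ->.
rewrite leq_eqVlt => /orP[/eqP -> //|lt_kn].
by rewrite /= nth_rcons size_bern_seq lt_kn IHn.
Qed.

Lemma bernoulli_polyE (w : R) n : bernoulli_poly n w
  = w ^+ n - \sum_(k < n) ('C(n.+1, k)%:R / n.+1%:R) * bernoulli_poly k w.
Proof.
case: n => [|n]; first by rewrite big_ord0 subr0 expr0.
rewrite /bernoulli_poly /= nth_rcons size_bern_seq ltnn eqxx.
by congr (_ - _); apply: eq_bigr => k _; rewrite nth_bern_seq // -ltnS.
Qed.

End BernoulliRecurrence.

Section BernoulliCharacterization.
Variable R : numFieldType.

Lemma bernoulli_poly_unique (w l : R) (beta : nat -> R) :
  (forall n, \sum_(k < n.+1) 'C(n.+1, k)%:R * beta k = l * (n.+1%:R * w ^+ n)) ->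
  forall n, beta n = l * bernoulli_poly n w.
Proof.
move=> beta_rec; elim/ltn_ind => n IHn.
have n1_neq0 : n.+1%:R != 0 :> R by rewrite pnatr_eq0.
move: (beta_rec n); rewrite big_ord_recr /= binSn.
set S := \sum_(k < n) _ => /(canRL (addKr S)) beta_n.
apply: (mulfI n1_neq0); rewrite beta_n bernoulli_polyE mulrBr mulr_sumr.
have -> : \sum_(k < n) l * ('C(n.+1, k)%:R / n.+1%:R * bernoulli_poly k w) = S / n.+1%:R.
  rewrite /S mulr_suml; apply: eq_bigr => k _; rewrite IHn ?ltn_ord //.
  by field; rewrite addrC natr1.
by clearbody S; field; rewrite addrC natr1.
Qed.

(* In exponential generating functions: K(t) (e^(st) - 1) = l s t e^(swt). *)
Lemma bernoulli_poly_binconv (s w l : R) (K : nat -> R) : s != 0 ->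
  (forall m, binconv K (fun k => s ^+ k) m.+1 - K m.+1
             = l * s * (m.+1%:R * (s * w) ^+ m)) ->
  forall n, K n = l * s ^+ n * bernoulli_poly n w.
Proof.
move=> s_neq0 K_rec.
have sn_neq0 k : s ^+ k != 0 by rewrite expf_neq0.
have beta_rec m :
    \sum_(k < m.+1) 'C(m.+1, k)%:R * (K k / s ^+ k) = l * (m.+1%:R * w ^+ m).
  apply: (mulIf (sn_neq0 m.+1)).
  transitivity (binconv K (fun k => s ^+ k) m.+1 - K m.+1).
    rewrite /binconv [\sum_(k < m.+2) _]big_ord_recr /= subnn binn expr0.
    rewrite mul1r mulr1 addrK mulr_suml; apply: eq_bigr => k _.
    have -> : s ^+ m.+1 = s ^+ k * s ^+ (m.+1 - k) by rewrite -exprD subnKC // ltnW.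
    by field.
  by rewrite K_rec exprMn exprS; ring.
move=> n; rewrite -[K n](divfK (sn_neq0 n)).
by rewrite (@bernoulli_poly_unique w l (fun k => K k / s ^+ k) beta_rec); ring.
Qed.

End BernoulliCharacterization.

(* In exponential generating functions: [I(t) (e^(-ct) - e^(ct)) = l t] implies
   [e^(xt) I(t) (e^(2ct) - 1) = - l t e^((x+c)t)]. *)
Lemma binconv_exp_shift (R : numFieldType) (c x l : R) (I : nat -> R) :
  (forall m, binconv I (fun j => (- c) ^+ j - c ^+ j) m = l * (m == 1)%:R) ->
  forall m, binconv (binconv (fun k => x ^+ k) I) (fun k => (2 * c) ^+ k) m.+1
            - binconv (fun k => x ^+ k) I m.+1
          = - l * (m.+1%:R * (x + c) ^+ m).
Proof.
move=> I_sinh m.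
have exp_diff : (fun k => x ^+ k - (2 * c + x) ^+ k)
    =1 binconv (fun j => (x + c) ^+ j) (fun j => (- c) ^+ j - c ^+ j).
  move=> k; rewrite binconvC binconvBl !binconv_exp.
  by congr (_ ^+ _ - _ ^+ _); ring.
have conv_shift n : binconv (binconv (fun k => x ^+ k) I) (fun k => (2 * c) ^+ k) n
    = binconv (fun k => (2 * c + x) ^+ k) I n.
  by rewrite binconvC -binconvA; apply: eq_binconv => // k; apply: binconv_exp.
rewrite conv_shift -opprB -binconvBl (eq_binconv exp_diff (frefl I)) binconvA.
have sinh : binconv (fun j => (- c) ^+ j - c ^+ j) I =1 (fun k => l * (k == 1)%:R).
  by move=> k; rewrite binconvC I_sinh.
by rewrite (eq_binconv (frefl _) sinh) binconvMr binconv_delta1 mulNr.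
Qed.

Theorem theorem5 (C : numClosedFieldType) (a b d : C) (n : nat) :
  a != b -> (1 <= n)%N ->
  poly_integral (Spoly a b d n) a b
    = 2 ^+ n * (b - a) ^+ n.+1 * bernoulli_poly n (2^-1 + d / (b - a)).
Proof.
(* The identity also holds for n = 0. *)
move=> neq_ab _; set c := b - a.
have c_neq0 : c != 0 by rewrite subr_eq0 eq_sym.
have two_neq0 : 2 != 0 :> C by rewrite pnatr_eq0.
rewrite poly_integral_Spoly.
rewrite (bernoulli_poly_binconv (s := 2 * c) (w := 2^-1 + d / c) (l := c)) ?mulf_neq0 //.
  by rewrite exprMn exprS; ring.
move=> m; rewrite (binconv_exp_shift (2 * d) (binconv_Qintegral a b)).
have -> : 2 * c * (2^-1 + d / c) = 2 * d + c by field.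
by rewrite /c; ring.
Qed.
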